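(* Let $G$ be a group with finite generating sets $S$ and $T$ (neither containing the identity), and let $d_S$ and $d_T$ be the cardinal metrics on $G$ induced by $S$ and $T$, respectively. Then every injective map $f\colon G\to G$ is bi-Lipschitz as a map $(G,d_T)\to(G,d_S)$, i.e. there is a constant $K\ge 1$ with $\frac1K d_T(g,h)\le d_S(f(g),f(h))\le K d_T(g,h)$ for all $g,h\in G$. In particular, every permutation of $G$ is a bi-Lipschitz equivalence, and so $(G,d_S)$ and $(G,d_T)$ are bi-Lipschitz equivalent.
   Context: For a generating set $U$ of $G$ (not containing the identity), the cardinal norm is $\|g\|_U = \min\{|A| : A\subseteq U,\ g\in\langle A\rangle\}$, where $\langle A\rangle$ is the subgroup generated by $A$, and the cardinal metric induced by $U$ is $d_U(g,h)=\|g^{-1}h\|_U$. *)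

From Stdlib Require Import Reals List ClassicalEpsilon.
Import ListNotations.

Record group := Group {
  gcar :> Type;
  gmul : gcar -> gcar -> gcar;
  ginv : gcar -> gcar;
  gone : gcar;
  gmulA : forall x y z, gmul x (gmul y z) = gmul (gmul x y) z;
  gmul1g : forall x, gmul gone x = x;
  gmulVg : forall x, gmul (ginv x) x = gone
}.

Arguments gmul {g}.
Arguments ginv {g}.
Arguments gone {g}.

Inductive gen {G : group} (A : list G) : G -> Prop :=
| gen_one : gen A gone
| gen_in : forall a, In a A -> gen A a
| gen_mul : forall x y, gen A x -> gen A y -> gen A (gmul x y)
| gen_inv : forall x, gen A x -> gen A (ginv x).

Definition finite_gen_set (G : group) (U : list G) : Prop :=
  NoDup U /\ ~ In gone U /\ forall g : G, gen U g.

Definition norm_witness {G : group} (U : list G) (g : G) (n : nat) : Prop :=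
  exists A : list G, NoDup A /\ incl A U /\ length A = n /\ gen A g.

Definition cnorm {G : group} (U : list G) (g : G) : nat :=
  epsilon (inhabits 0%nat)
    (fun n => norm_witness U g n /\ forall m, norm_witness U g m -> (n <= m)%nat).

Definition cdist {G : group} (U : list G) (g h : G) : nat :=
  cnorm U (gmul (ginv g) h).

(* A cardinal norm only takes values in {0, ..., |U|}, and it vanishes exactly
   at the identity (the empty subset generates the trivial subgroup, and U
   generates G).  So both cardinal metrics vanish exactly on the diagonal and
   are bounded by a common N >= 1; for an injective f the distances d_T(g,h)
   and d_S(f g, f h) are then zero together, and any two naturals that are zero
   together and bounded by N are within a factor N of each other. *)
From Stdlib Require Import Reals List.
From Stdlib Require Import Classical ClassicalEpsilon Lia Lra Wf_nat.
Import ListNotations.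
Open Scope R_scope.

Section GroupLaws.

Variable G : group.
Implicit Types x y : G.

Lemma mulgV x : gmul x (ginv x) = gone.
Proof.
  rewrite <- (gmul1g G (gmul x (ginv x))).
  rewrite <- (gmulVg G (ginv x)) at 1.
  rewrite <- gmulA, (gmulA G (ginv x) x), gmulVg, gmul1g.
  apply gmulVg.
Qed.

Lemma mulg1 x : gmul x gone = x.
Proof. rewrite <- (gmulVg G x), gmulA, mulgV; apply gmul1g. Qed.

Lemma invg1 : ginv (@gone G) = gone.
Proof. rewrite <- (mulg1 (ginv gone)); apply gmulVg. Qed.

Lemma mulVg_eq1 x y : gmul (ginv x) y = gone -> x = y.
Proof.
  intro E.
  rewrite <- (mulg1 x), <- E, gmulA, mulgV.
  apply gmul1g.
Qed.

Lemma gen_nil x : gen [] x -> x = gone.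
Proof.
  induction 1 as [| a Ha | x y _ -> _ -> | x _ ->].
  - reflexivity.
  - destruct Ha.
  - apply gmul1g.
  - apply invg1.
Qed.

End GroupLaws.

Arguments mulVg_eq1 {G x y}.

Lemma ex_minimal_nat (P : nat -> Prop) n :
  P n -> exists m, P m /\ forall k, P k -> (m <= k)%nat.
Proof.
  intro Pn.
  destruct (dec_inh_nat_subset_has_unique_least_element P
              (fun k => classic (P k)) (ex_intro _ n Pn)) as [m [Pm _]].
  exists m; exact Pm.
Qed.

Section CardinalNorm.

Variables (G : group) (U : list G).
Hypothesis U_gen : finite_gen_set G U.

Lemma norm_witness_length g : norm_witness U g (length U).
Proof.
  destruct U_gen as [U_uniq [_ U_spans]].
  exists U; repeat split; auto using incl_refl.
Qed.

Lemma cnorm_spec g :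
  norm_witness U g (cnorm U g) /\
  forall m, norm_witness U g m -> (cnorm U g <= m)%nat.
Proof.
  unfold cnorm.
  apply epsilon_spec, (ex_minimal_nat _ _ (norm_witness_length g)).
Qed.

Lemma cnorm_le_length g : (cnorm U g <= length U)%nat.
Proof. apply (proj2 (cnorm_spec g)), norm_witness_length. Qed.

Lemma cnorm_one : cnorm U gone = 0%nat.
Proof.
  assert (W0 : norm_witness U gone 0).
  { exists []; repeat split; [constructor | intros a [] | constructor]. }
  pose proof (proj2 (cnorm_spec gone) 0%nat W0); lia.
Qed.

Lemma cnorm_eq0 g : cnorm U g = 0%nat -> g = gone.
Proof.
  intro E.
  destruct (proj1 (cnorm_spec g)) as [A [_ [_ [A_size A_gen]]]].
  rewrite E in A_size.
  destruct A; [apply gen_nil, A_gen | discriminate].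
Qed.

Lemma cdist_le_length g h : (cdist U g h <= length U)%nat.
Proof. apply cnorm_le_length. Qed.

Lemma cdist_eq0 g h : cdist U g h = 0%nat <-> g = h.
Proof.
  split.
  - intro E; apply mulVg_eq1, cnorm_eq0, E.
  - intros <-; unfold cdist; rewrite gmulVg; apply cnorm_one.
Qed.

End CardinalNorm.

Lemma INR_le_mul_of_bounded (a b N : nat) :
  (b <= N)%nat -> (a = 0%nat -> b = 0%nat) -> INR b <= INR N * INR a.
Proof.
  intros b_le_N a0_b0.
  destruct a as [| a].
  - rewrite (a0_b0 eq_refl); simpl; lra.
  - assert (INR b <= INR N) by (apply le_INR, b_le_N).
    assert (1 <= INR (S a)) by (apply (le_INR 1); lia).
    assert (0 <= INR b) by apply pos_INR.
    nra.
Qed.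

Theorem mainTheorem4 (G : group) (S T : list G) :
  finite_gen_set G S -> finite_gen_set G T ->
  forall f : G -> G, (forall x y, f x = f y -> x = y) ->
  exists K : R, 1 <= K /\
    forall g h : G,
      / K * INR (cdist T g h) <= INR (cdist S (f g) (f h)) /\
      INR (cdist S (f g) (f h)) <= K * INR (cdist T g h).
Proof.
  intros S_gen T_gen f f_inj.
  set (N := Datatypes.S (length S + length T)).
  assert (N_ge1 : 1 <= INR N) by (apply (le_INR 1); unfold N; lia).
  exists (INR N); split; [exact N_ge1 | intros g h].
  assert (zero_together :
            cdist T g h = 0%nat <-> cdist S (f g) (f h) = 0%nat).
  { rewrite (cdist_eq0 _ _ T_gen), (cdist_eq0 _ _ S_gen).
    split; [intros -> | apply f_inj]; reflexivity. }
  pose proof (cdist_le_length _ _ T_gen g h).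
  pose proof (cdist_le_length _ _ S_gen (f g) (f h)).
  split.
  - apply Rmult_le_reg_l with (INR N); [lra |].
    rewrite <- Rmult_assoc, Rinv_r, Rmult_1_l by lra.
    apply INR_le_mul_of_bounded; [unfold N; lia | apply zero_together].
  - apply INR_le_mul_of_bounded; [unfold N; lia | apply zero_together].
Qed.
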